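(* For $v\in\mathbb{R}$ consider the system of ODEs for $(a,b,r,s)(\xi)\in\mathbb{R}^4$: $$\partial_\xi a=r,\qquad \partial_\xi b=s,\qquad \partial_\xi r=-vr-\frac{sa}{2}+\frac{a|r|}{2},\qquad \partial_\xi s=-vs-ra.$$ Consider the boundary conditions (H1) $(a,b,r,s)(-\infty)=(a_0,b_0,0,0)$ and $(a,b,r,s)(+\infty)=(0,2,0,0)$; (H2) $(a,b,r,s)(-\infty)=(0,-2,0,0)$ and $(a,b,r,s)(+\infty)=(a_0,b_0,0,0)$. Then: 1. For every $v>0$ there are exactly two pairs $(a_0,b_0)$ for which there exists a non-constant trajectory satisfying (H1), namely $(a_0,b_0)=(4v,-8v+2)$, for which $r(\xi)<0$ for all $\xi\in\mathbb{R}$ along the trajectory, and $(a_0,b_0)=(-4v,-8v+2)$, for which $r(\xi)>0$ for all $\xi$. Also, for $v>0$ there is no non-constant trajectory satisfying (H2) for any $(a_0,b_0)$. 2. For $v=0$ there is no non-constant trajectory converging to equilibria as $\xi\to\pm\infty$ such that $(a,b,r,s)(-\infty)=(0,b_0,0,0)$ or $(a,b,r,s)(+\infty)=(0,b_0,0,0)$, for any $b_0\in\mathbb{R}$. 3. For every $v<0$ there are exactly two pairs $(a_0,b_0)$ for which there exists a non-constant trajectory satisfying (H2), namely $(a_0,b_0)=(4v,-8v-2)$, with $r(\xi)<0$ for all $\xi$, and $(a_0,b_0)=(-4v,-8v-2)$, with $r(\xi)>0$ for all $\xi$. Also, for $v<0$ there is no non-constant trajectory satisfying (H1) for any $(a_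0,b_0)$.
   Context: A trajectory is a solution $(a,b,r,s):\mathbb{R}\to\mathbb{R}^4$ of the system defined for all $\xi\in\mathbb{R}$; the equilibria of the system are exactly the points with $r=s=0$. *)

From Stdlib Require Import Reals.
From Coquelicot Require Import Coquelicot.
Open Scope R_scope.

Definition trajectory (v : R) (a b r s : R -> R) : Prop :=
  forall xi : R,
    is_derive a xi (r xi) /\
    is_derive b xi (s xi) /\
    is_derive r xi (- v * r xi - s xi * a xi / 2 + a xi * Rabs (r xi) / 2) /\
    is_derive s xi (- v * s xi - r xi * a xi).

Definition tends_to (a b r s : R -> R) (t : Rbar) (p q : R) : Prop :=
  is_lim a t p /\ is_lim b t q /\ is_lim r t 0 /\ is_lim s t 0.

Definition nonconstant (a b r s : R -> R) : Prop :=
  exists x y : R, (a x, b x, r x, s x) <> (a y, b y, r y, s y).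

Definition H1 (a b r s : R -> R) (a0 b0 : R) : Prop :=
  tends_to a b r s m_infty a0 b0 /\ tends_to a b r s p_infty 0 2.

Definition H2 (a b r s : R -> R) (a0 b0 : R) : Prop :=
  tends_to a b r s m_infty 0 (-2) /\ tends_to a b r s p_infty a0 b0.

(* The system has the symmetries (a,b,r,s) |-> (-a,b,-r,s) and (a,b,r,s)(xi) |-> (-a,-b,r,s)(-xi),
   the latter exchanging v with -v and (H1) with (H2); so it suffices to treat v > 0 and v = 0.

   The vector field is locally Lipschitz and vanishes on the plane r = s = 0, so by Gronwall's
   inequality for r^2 + s^2 a non-constant trajectory never meets that plane.  Moreover
   s + v b + a^2/2 is a first integral.

   For v > 0, if a -> 0 at -oo then r^2 + s^2 is nonincreasing near -oo and tends to 0 there, which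
   forces a rest point; this excludes (H2) and a0 = 0.  If a -> a0 > 0 at -oo, then s - 2r (where
   r >= 0) and s + 2r (where r <= 0) solve scalar linear equations, so their signs are preserved,
   and a continuity argument shows r < 0 and s = -2r along the whole orbit.  Hence b + 2a = 2, the
   first integral gives r = a^2/4 - v a, and letting xi -> -oo yields a0 = 4v and b0 = 2 - 8v.
   The logistic front a = 4v / (1 + exp (v xi)) realises these values.

   For v = 0 the first integral gives s = -a^2/2, which makes a r nondecreasing; as a r vanishes at
   both ends it vanishes identically, and so does its derivative r^2 + a^4/4 + a^2 |r| / 2. *)

From Stdlib Require Import Reals Ranalysis5 Lra Psatz.
From Coquelicot Require Import Coquelicot.
Open Scope R_scope.

Implicit Types (f df : R -> R).

(** * Real analysis *)

Lemma is_derive_eq f (x l l' : R) : is_derive f x l -> l = l' -> is_derive f x l'.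
Proof. now intros H <-. Qed.

Lemma continuity_pt_of_is_derive f x l : is_derive f x l -> continuity_pt f x.
Proof.
  intros H. apply continuity_pt_filterlim, (ex_derive_continuous f x). now exists l.
Qed.

Lemma continuity_of_is_derive f df : (forall x, is_derive f x (df x)) -> continuity f.
Proof. intros Hd x. exact (continuity_pt_of_is_derive f x _ (Hd x)). Qed.

Lemma is_derive_nonneg_le f df p q : p <= q ->
  (forall x, p <= x <= q -> is_derive f x (df x)) ->
  (forall x, p <= x <= q -> 0 <= df x) -> f p <= f q.
Proof.
  intros Hpq Hd Hpos.
  destruct (MVT_gen f p q df) as [c [Hc Heq]];
    rewrite ?Rmin_left, ?Rmax_right in * by lra.
  - intros x Hx. apply Hd. lra.
  - intros x Hx. apply (continuity_pt_of_is_derive f x (df x)), Hd. lra.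
  - assert (0 <= df c) by (apply Hpos; lra). nra.
Qed.

Lemma is_derive_nonpos_ge f df p q : p <= q ->
  (forall x, p <= x <= q -> is_derive f x (df x)) ->
  (forall x, p <= x <= q -> df x <= 0) -> f q <= f p.
Proof.
  intros Hpq Hd Hneg.
  enough (- f p <= - f q) by lra.
  apply (is_derive_nonneg_le (fun t => - f t) (fun t => - df t)); auto.
  - intros x Hx. exact (is_derive_opp f x (df x) (Hd x Hx)).
  - intros x Hx. specialize (Hneg x Hx). lra.
Qed.

Lemma is_derive_zero_const f : (forall x, is_derive f x 0) -> forall x y, f x = f y.
Proof.
  intros Hd.
  assert (Hle : forall p q, p <= q -> f p = f q).
  { intros p q Hpq. apply Rle_antisym.
    - apply (is_derive_nonneg_le f (fun _ => 0)); auto; intros; lra.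
    - apply (is_derive_nonpos_ge f (fun _ => 0)); auto; intros; lra. }
  intros x y. destruct (Rle_dec x y); [auto | symmetry; apply Hle; lra].
Qed.

Lemma is_derive_pos_left_lt f x l : is_derive f x l -> 0 < l ->
  exists d, 0 < d /\ forall h, 0 < h < d -> f (x - h) < f x.
Proof.
  intros H Hl. apply is_derive_Reals in H.
  destruct (H (l / 2)) as [d Hd]; [lra|].
  exists d. split; [apply cond_pos|]. intros h Hh.
  assert (Hq : Rabs ((f (x + - h) - f x) / - h - l) < l / 2).
  { apply Hd; [lra|]. rewrite Rabs_Ropp, Rabs_right; lra. }
  apply Rabs_def2 in Hq.
  set (q := (f (x + - h) - f x) / - h) in Hq.
  assert (f (x - h) - f x = q * - h) by (unfold q, Rminus; field; lra).
  nra.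
Qed.

Lemma continuity_pos_near f x : continuity_pt f x -> 0 < f x ->
  exists d, 0 < d /\ forall y, Rabs (y - x) < d -> 0 < f y.
Proof.
  intros Hc Hp. destruct (Hc (f x) Hp) as [d [Hd H]].
  exists d; split; auto. intros y Hy.
  destruct (Req_dec y x) as [->|Hyx]; auto.
  assert (A : R_dist (f y) (f x) < f x) by (apply H; repeat split; auto).
  unfold R_dist in A. apply Rabs_def2 in A. lra.
Qed.

Lemma continuity_first_root f p q : continuity f -> p < q -> 0 < f p -> f q <= 0 ->
  exists e, p < e <= q /\ f e = 0 /\ forall t, p <= t < e -> 0 < f t.
Proof.
  intros Hc Hpq Hp Hq.
  set (E := fun t => p <= t /\ forall y, p <= y <= t -> 0 < f y).
  assert (Hbound : is_upper_bound E q).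
  { intros t [Ht Hy]. destruct (Rle_dec t q); auto.
    assert (0 < f q) by (apply Hy; lra). lra. }
  assert (Hp' : E p) by (split; [lra | intros y Hy; now replace y with p by lra]).
  destruct (completeness E) as [e [He1 He2]]; [now exists q | now exists p |].
  assert (Hpe : p <= e) by now apply He1.
  assert (Heq : e <= q) by now apply He2.
  assert (Hpos : forall t, p <= t < e -> 0 < f t).
  { intros t Ht. destruct (Rlt_dec 0 (f t)) as [P|P]; auto. exfalso.
    assert (e <= t); [|lra]. apply He2. intros t' [H1 H2].
    destruct (Rle_dec t' t); auto. exfalso. apply P, H2. lra. }
  assert (Hfe : f e = 0).
  { destruct (Rtotal_order (f e) 0) as [N|[Z|P]]; auto; exfalso.
    - destruct (continuity_pos_near (fun t => - f t) e) as [d [Hd Hy]].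
      { now apply continuity_pt_opp. } { lra. }
      assert (p < e) by (destruct (Req_dec e p) as [->|]; lra).
      set (y := Rmax p (e - d / 2)).
      assert (p <= y) by apply Rmax_l.
      assert (y < e) by (apply Rmax_lub_lt; lra).
      assert (e - d / 2 <= y) by apply Rmax_r.
      assert (0 < - f y) by (apply Hy; rewrite Rabs_left; lra).
      assert (0 < f y) by (apply Hpos; lra). lra.
    - destruct (continuity_pos_near f e) as [d [Hd Hy]]; auto.
      assert (e + d / 2 <= e); [|lra]. apply He1. split; [lra|].
      intros y Hy'. destruct (Rlt_dec y e); [apply Hpos; lra|].
      apply Hy. rewrite Rabs_right; lra. }
  exists e. split; [|split]; auto.
  split; auto. destruct (Req_dec e p) as [->|]; lra.
Qed.

Lemma continuity_last_root f p q : continuity f -> p < q -> f p <= 0 -> 0 < f q ->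
  exists e, p <= e < q /\ f e = 0 /\ forall t, e < t <= q -> 0 < f t.
Proof.
  intros Hc Hpq Hp Hq.
  assert (Hg : continuity (fun t => f (- t))).
  { intros x. apply (continuity_pt_comp Ropp f).
    - apply continuity_pt_opp, continuity_pt_id.
    - apply Hc. }
  destruct (continuity_first_root (fun t => f (- t)) (- q) (- p) Hg)
    as [e [He [Hz Hpos]]]; rewrite ?Ropp_involutive; try lra.
  exists (- e). split; [lra|]. split; auto.
  intros t Ht. rewrite <- (Ropp_involutive t). apply Hpos. lra.
Qed.

Lemma continuity_bounded f p q : continuity f -> p <= q ->
  exists M, 0 <= M /\ forall t, p <= t <= q -> Rabs (f t) <= M.
Proof.
  intros Hc Hpq.
  destruct (continuity_ab_maj (fun t => Rabs (f t)) p q Hpq) as [m [Hm _]].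
  { intros c _. apply (continuity_pt_comp f Rabs); [apply Hc | apply Rcontinuity_abs]. }
  exists (Rabs (f m)). split; [apply Rabs_pos | auto].
Qed.

Ltac auto_derive_hyps :=
  auto_derive;
  [ repeat split; eexists; eassumption
  | repeat match goal with
           | H : is_derive ?f ?x ?l |- _ =>
               rewrite (is_derive_unique (fun t : R => f t) x l H); clear H
           end ].

Lemma pow2_nonpos_eq_0 x : x ^ 2 <= 0 -> x = 0.
Proof. intros H. apply Rsqr_0_uniq, Rle_antisym; [unfold Rsqr; nra | apply Rle_0_sqr]. Qed.

Lemma gronwall_zero f df K p q x y :
  (forall t, p <= t <= q -> is_derive f t (df t)) ->
  (forall t, p <= t <= q -> Rabs (df t) <= K * Rabs (f t)) ->
  p <= x <= q -> p <= y <= q -> f x = 0 -> f y = 0.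
Proof.
  intros Hd Hb Hx Hy Hfx.
  set (h c t := f t ^ 2 * exp (c * t)).
  assert (Hdh : forall c t, p <= t <= q ->
            is_derive (h c) t ((2 * df t * f t + c * f t ^ 2) * exp (c * t))).
  { intros c t Ht. specialize (Hd t Ht). unfold h. auto_derive_hyps. ring. }
  assert (Hsq : forall t, p <= t <= q -> Rabs (2 * df t * f t) <= 2 * K * f t ^ 2).
  { intros t Ht. specialize (Hb t Ht).
    rewrite !Rabs_mult, Rabs_right, <- pow2_abs by lra.
    pose proof (Rabs_pos (f t)). nra. }
  assert (Hy0 : forall c, f y ^ 2 * exp (c * y) <= 0 -> f y = 0).
  { intros c Hc. apply pow2_nonpos_eq_0.
    apply (Rmult_le_reg_r (exp (c * y))); [apply exp_pos | lra]. }
  destruct (Rle_dec x y).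
  - apply (Hy0 (- 2 * K)).
    assert (h (- 2 * K) y <= h (- 2 * K) x); [|unfold h in *; rewrite Hfx in *; lra].
    apply (is_derive_nonpos_ge (h (- 2 * K))
             (fun t => (2 * df t * f t + - 2 * K * f t ^ 2) * exp (- 2 * K * t)) x y); auto.
    + intros t Ht. apply Hdh. lra.
    + intros t Ht. specialize (Hsq t ltac:(lra)). apply Rabs_le_between in Hsq.
      pose proof (exp_pos (- 2 * K * t)). nra.
  - apply (Hy0 (2 * K)).
    assert (h (2 * K) y <= h (2 * K) x); [|unfold h in *; rewrite Hfx in *; lra].
    apply (is_derive_nonneg_le (h (2 * K))
             (fun t => (2 * df t * f t + 2 * K * f t ^ 2) * exp (2 * K * t)) y x); [lra| |].
    + intros t Ht. apply Hdh. lra.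
    + intros t Ht. specialize (Hsq t ltac:(lra)). apply Rabs_le_between in Hsq.
      pose proof (exp_pos (2 * K * t)). nra.
Qed.

Lemma gronwall_pos f df K p q x y :
  (forall t, p <= t <= q -> is_derive f t (df t)) ->
  (forall t, p <= t <= q -> Rabs (df t) <= K * Rabs (f t)) ->
  p <= x <= q -> p <= y <= q -> 0 < f x -> 0 < f y.
Proof.
  intros Hd Hb Hx Hy Hfx.
  assert (Hnz : forall t, p <= t <= q -> f t <> 0).
  { intros t Ht Hft. assert (f x = 0) by exact (gronwall_zero f df K p q t x Hd Hb Ht Hx Hft).
    lra. }
  assert (Hc : forall t, Rmin x y <= t <= Rmax x y -> continuity_pt f t).
  { intros t Ht. apply (continuity_pt_of_is_derive f t (df t)), Hd.
    split; [apply (Rle_trans _ (Rmin x y)) | apply (Rle_trans _ (Rmax x y))]; try lra.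
    - apply Rmin_glb; lra.
    - apply Rmax_lub; lra. }
  destruct (Rlt_dec 0 (f y)) as [|Hfy]; auto.
  assert (f y < 0) by (assert (f y <> 0) by (apply Hnz; auto); lra).
  destruct (Rtotal_order x y) as [Hxy|[->|Hxy]]; [| lra |].
  - destruct (IVT_interv (fun t => - f t) x y) as [z [Hz Hfz]]; try lra.
    + intros t Ht. apply continuity_pt_opp, Hc. rewrite Rmin_left, Rmax_right; lra.
    + destruct (Hnz z ltac:(lra)). lra.
  - destruct (IVT_interv f y x) as [z [Hz Hfz]]; try lra.
    + intros t Ht. apply Hc. rewrite Rmin_right, Rmax_left; lra.
    + destruct (Hnz z ltac:(lra)). lra.
Qed.

Lemma is_lim_comp_ex_derive (F : R -> R) f x (l : R) :
  ex_derive F l -> is_lim f x l -> is_lim (fun t => F (f t)) x (F l).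
Proof.
  intros HF Hf. apply (is_lim_comp_continuous f F x l Hf).
  exact (ex_derive_continuous (K := R_AbsRing) (V := R_NormedModule) F l HF).
Qed.

Lemma is_lim_lower_bound f x (c l : R) :
  Rbar_locally' x (fun t => c <= f t) -> is_lim f x l -> c <= l.
Proof. intros Hc Hf. exact (is_lim_le_loc (fun _ => c) f x c l Hc (is_lim_const c x) Hf). Qed.

Lemma is_lim_upper_bound f x (c l : R) :
  Rbar_locally' x (fun t => f t <= c) -> is_lim f x l -> l <= c.
Proof. intros Hc Hf. exact (is_lim_le_loc f (fun _ => c) x l c Hc Hf (is_lim_const c x)). Qed.

Lemma is_lim_m_infty_near f (l e : R) : is_lim f m_infty l -> 0 < e ->
  exists T, forall t, t <= T -> Rabs (f t - l) < e.
Proof.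
  intros Hf He. apply is_lim_spec in Hf. destruct (Hf (mkposreal e He)) as [M HM].
  exists (M - 1). intros t Ht. apply HM. lra.
Qed.

Lemma is_lim_const_fun f x (l : R) :
  (forall t u, f t = f u) -> is_lim f x l -> forall t, f t = l.
Proof.
  intros Hc Hf t. apply (is_lim_ext f (fun _ => f t)) in Hf; [|intros u; apply Hc].
  pose proof (is_lim_unique _ _ _ Hf) as E. rewrite Lim_const in E. now injection E.
Qed.

Lemma is_lim_comp_opp f x l : is_lim f x l -> is_lim (fun t => f (- t)) (Rbar_opp x) l.
Proof.
  intros Hf. apply (is_lim_comp f Ropp (Rbar_opp x) l x Hf).
  - rewrite <- (Rbar_opp_involutive x) at 2. apply is_lim_opp, is_lim_id.
  - destruct x as [x| |]; simpl.
    + exists (mkposreal 1 Rlt_0_1). intros y _ Hy E. apply Hy.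
      injection E. lra.
    + now exists 0.
    + now exists 0.
Qed.

(** * Trajectories *)

Definition speed2_rhs (v A X Y : R) : R :=
  - 2 * v * (X ^ 2 + Y ^ 2) - 3 * A * X * Y + A * X * Rabs X.

Lemma speed2_rhs_between (v A X Y M : R) : Rabs A <= M ->
  (- 2 * v - 5 / 2 * M) * (X ^ 2 + Y ^ 2) <= speed2_rhs v A X Y
    <= (- 2 * v + 5 / 2 * M) * (X ^ 2 + Y ^ 2).
Proof.
  intros HA. unfold speed2_rhs. apply Rabs_le_between in HA.
  assert (0 <= (M - A) * (X - Y) ^ 2) by (apply Rmult_le_pos; [lra | apply pow2_ge_0]).
  assert (0 <= (M + A) * (X + Y) ^ 2) by (apply Rmult_le_pos; [lra | apply pow2_ge_0]).
  assert (0 <= (M - A) * (X + Y) ^ 2) by (apply Rmult_le_pos; [lra | apply pow2_ge_0]).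
  assert (0 <= (M + A) * (X - Y) ^ 2) by (apply Rmult_le_pos; [lra | apply pow2_ge_0]).
  assert (0 <= (M - A) * X ^ 2) by (apply Rmult_le_pos; [lra | apply pow2_ge_0]).
  assert (0 <= (M + A) * X ^ 2) by (apply Rmult_le_pos; [lra | apply pow2_ge_0]).
  assert (0 <= M * Y ^ 2) by (apply Rmult_le_pos; [lra | apply pow2_ge_0]).
  destruct (Rle_dec 0 X); [rewrite (Rabs_right X) by lra | rewrite (Rabs_left X) by lra];
    split; nra.
Qed.

Section Trajectory.

Variables (v : R) (a b r s : R -> R).
Hypothesis traj : trajectory v a b r s.

Lemma trajectory_continuity : continuity a /\ continuity r /\ continuity s.
Proof.
  split; [|split].
  - exact (continuity_of_is_derive a _ (fun t => proj1 (traj t))).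
  - exact (continuity_of_is_derive r _ (fun t => proj1 (proj2 (proj2 (traj t))))).
  - exact (continuity_of_is_derive s _ (fun t => proj2 (proj2 (proj2 (traj t))))).
Qed.

Lemma first_integral x y :
  s x + v * b x + a x ^ 2 / 2 = s y + v * b y + a y ^ 2 / 2.
Proof.
  apply (is_derive_zero_const (fun t => s t + v * b t + a t ^ 2 / 2)).
  intros t. destruct (traj t) as (Ha & Hb & _ & Hs). auto_derive_hyps. field.
Qed.

Lemma is_derive_speed2 t :
  is_derive (fun t => r t ^ 2 + s t ^ 2) t (speed2_rhs v (a t) (r t) (s t)).
Proof. destruct (traj t) as (_ & _ & Hr & Hs). auto_derive_hyps. unfold speed2_rhs. field. Qed.

Lemma rest_point_not_nonconstant x0 : r x0 = 0 -> s x0 = 0 -> ~ nonconstant a b r s.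
Proof.
  intros Hr0 Hs0 [x [y Hxy]]. apply Hxy.
  assert (Hrest : forall t, r t = 0 /\ s t = 0).
  { intros t.
    destruct (continuity_bounded a (Rmin x0 t) (Rmax x0 t)) as [M [_ HM]];
      [apply trajectory_continuity | apply Rmin_Rmax |].
    assert (r t ^ 2 + s t ^ 2 = 0).
    { apply (gronwall_zero (fun t => r t ^ 2 + s t ^ 2)
        (fun t => speed2_rhs v (a t) (r t) (s t))
        (2 * Rabs v + 5 / 2 * M) (Rmin x0 t) (Rmax x0 t) x0 t).
      - intros z _. apply is_derive_speed2.
      - intros z Hz. rewrite (Rabs_right (r z ^ 2 + s z ^ 2)) by nra.
        destruct (speed2_rhs_between v (a z) (r z) (s z) M (HM z Hz)).
        pose proof (Rle_abs v). pose proof (Rle_abs (- v)). rewrite Rabs_Ropp in *.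
        apply Rabs_le_between. split; nra.
      - split; [apply Rmin_l | apply Rmax_l].
      - split; [apply Rmin_r | apply Rmax_r].
      - rewrite Hr0, Hs0. ring. }
    split; nra. }
  assert (Hconst : forall f df, (forall t, is_derive f t (df t)) ->
                     (forall t, df t = 0) -> f x = f y).
  { intros f df Hf Hdf. apply is_derive_zero_const. intros t. rewrite <- (Hdf t). apply Hf. }
  rewrite (Hconst a r), (Hconst b s); try (intros t; apply traj); try (intros t; apply Hrest).
  now rewrite (proj1 (Hrest x)), (proj2 (Hrest x)), (proj1 (Hrest y)), (proj2 (Hrest y)).
Qed.

Lemma is_derive_s_sub_2r t : 0 <= r t ->
  is_derive (fun t => s t - 2 * r t) t ((a t - v) * (s t - 2 * r t)).
Proof.
  intros Hr. destruct (traj t) as (_ & _ & Hr' & Hs). auto_derive_hyps.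
  rewrite Rabs_right by lra. field.
Qed.

Lemma is_derive_s_add_2r t : r t <= 0 ->
  is_derive (fun t => s t + 2 * r t) t (- (a t + v) * (s t + 2 * r t)).
Proof.
  intros Hr. destruct (traj t) as (_ & _ & Hr' & Hs). auto_derive_hyps.
  rewrite Rabs_left1 by lra. field.
Qed.

Lemma s_sub_2r_pos_stable p q x y :
  (forall t, p <= t <= q -> 0 <= r t) -> p <= x <= q -> p <= y <= q ->
  0 < s x - 2 * r x -> 0 < s y - 2 * r y.
Proof.
  intros Hr Hx Hy.
  destruct (continuity_bounded a p q) as [M [_ HM]]; [apply trajectory_continuity | lra |].
  apply (gronwall_pos (fun t => s t - 2 * r t) (fun t => (a t - v) * (s t - 2 * r t))
           (M + Rabs v) p q x y); auto.
  - intros t Ht. apply is_derive_s_sub_2r, Hr, Ht.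
  - intros t Ht. rewrite Rabs_mult. apply Rmult_le_compat_r; [apply Rabs_pos|].
    specialize (HM t Ht). unfold Rminus. eapply Rle_trans; [apply Rabs_triang|].
    rewrite Rabs_Ropp. lra.
Qed.

Lemma s_add_2r_zero_stable p q x y :
  (forall t, p <= t <= q -> r t <= 0) -> p <= x <= q -> p <= y <= q ->
  s x + 2 * r x = 0 -> s y + 2 * r y = 0.
Proof.
  intros Hr Hx Hy.
  destruct (continuity_bounded a p q) as [M [_ HM]]; [apply trajectory_continuity | lra |].
  apply (gronwall_zero (fun t => s t + 2 * r t) (fun t => - (a t + v) * (s t + 2 * r t))
           (M + Rabs v) p q x y); auto.
  - intros t Ht. apply is_derive_s_add_2r, Hr, Ht.
  - intros t Ht. rewrite Rabs_mult, Rabs_Ropp. apply Rmult_le_compat_r; [apply Rabs_pos|].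
    specialize (HM t Ht). eapply Rle_trans; [apply Rabs_triang|]. lra.
Qed.

Lemma r_pos_of_s_sub_2r_nonpos xi : nonconstant a b r s ->
  0 < a xi -> 0 < r xi -> s xi - 2 * r xi <= 0 -> forall t, xi <= t -> 0 < r t.
Proof.
  intros Hnc Ha Hr Hu t Ht.
  destruct (Rlt_dec 0 (r t)) as [|Hrt]; auto. exfalso.
  destruct (continuity_first_root r xi t) as [eta [Heta [Hreta Hpos]]];
    [apply trajectory_continuity | destruct (Req_dec xi t) as [->|]; lra | lra | lra |].
  assert (Hr0 : forall z, xi <= z <= eta -> 0 <= r z).
  { intros z Hz. destruct (Req_dec z eta) as [->|]; [lra | left; apply Hpos; lra]. }
  assert (Haeta : a xi <= a eta).
  { apply (is_derive_nonneg_le a r); [lra | intros z _; apply traj | exact Hr0]. }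
  assert (Hseta : s eta < 0).
  { destruct (Rtotal_order (s eta) 0) as [|[Hs|Hs]]; auto.
    - now destruct (rest_point_not_nonconstant eta).
    - assert (0 < s xi - 2 * r xi); [|lra].
      apply (s_sub_2r_pos_stable xi eta eta xi); auto; lra. }
  (* r vanishes at eta with positive slope, yet is positive just before eta *)
  destruct (traj eta) as (_ & _ & Hdr & _). rewrite Hreta in Hdr.
  destruct (is_derive_pos_left_lt r eta _ Hdr) as [d [Hd Hlt]].
  { rewrite Rabs_R0. nra. }
  set (h := Rmin (d / 2) ((eta - xi) / 2)).
  assert (0 < h) by (apply Rmin_pos; lra).
  assert (h <= d / 2) by apply Rmin_l.
  assert (h <= (eta - xi) / 2) by apply Rmin_r.
  specialize (Hlt h ltac:(lra)). specialize (Hpos (eta - h) ltac:(lra)). lra.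
Qed.

Lemma no_r_pos_s_sub_2r_nonpos xi : nonconstant a b r s -> is_lim a p_infty 0 ->
  0 < a xi -> 0 < r xi -> s xi - 2 * r xi <= 0 -> False.
Proof.
  intros Hnc Hlim Ha Hr Hu.
  assert (Hrpos := r_pos_of_s_sub_2r_nonpos xi Hnc Ha Hr Hu).
  assert (a xi <= 0); [|lra].
  apply (is_lim_lower_bound a p_infty _ _); [|exact Hlim].
  exists xi. intros t Ht.
  apply (is_derive_nonneg_le a r); [lra | intros z _; apply traj |].
  intros z Hz. left. apply Hrpos. lra.
Qed.

Lemma no_r_pos_s_sub_2r_pos xi : 0 <= v -> (forall t, t <= xi -> 0 < a t) ->
  is_lim r m_infty 0 -> 0 < r xi -> 0 < s xi - 2 * r xi -> False.
Proof.
  intros Hv Ha Hlim Hr Hu.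
  assert (Hback : forall t, t <= xi -> (forall z, t <= z <= xi -> 0 <= r z) -> r xi <= r t).
  { intros t Ht Hrz.
    apply (is_derive_nonpos_ge r
      (fun z => - v * r z - s z * a z / 2 + a z * Rabs (r z) / 2) t xi Ht).
    - intros z _. apply traj.
    - intros z Hz.
      assert (0 < s z - 2 * r z) by (apply (s_sub_2r_pos_stable t xi xi z); auto; lra).
      specialize (Hrz z Hz). specialize (Ha z ltac:(lra)).
      rewrite Rabs_right by lra. nra. }
  assert (Hrpos : forall t, t <= xi -> 0 < r t).
  { intros t Ht. destruct (Rlt_dec 0 (r t)) as [|Hrt]; auto. exfalso.
    destruct (continuity_last_root r t xi) as [e [He [Hre Hpos]]];
      [apply trajectory_continuity | destruct (Req_dec t xi) as [->|]; lra | lra | lra |].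
    assert (r xi <= r e); [|lra].
    apply Hback; [lra|]. intros z Hz.
    destruct (Req_dec z e) as [->|]; [lra | left; apply Hpos; lra]. }
  assert (r xi <= 0); [|lra].
  apply (is_lim_lower_bound r m_infty _ _); [|exact Hlim].
  exists xi. intros t Ht. apply Hback; [lra|]. intros z Hz. left. apply Hrpos. lra.
Qed.

Lemma r_nonpos_where_a_pos T : 0 <= v -> nonconstant a b r s ->
  (forall t, t <= T -> 0 < a t) -> is_lim r m_infty 0 -> is_lim a p_infty 0 ->
  forall t, t <= T -> r t <= 0.
Proof.
  intros Hv Hnc Ha Hrm Hap t Ht.
  destruct (Rle_dec (r t) 0) as [|Hr]; auto. exfalso.
  destruct (Rle_dec (s t - 2 * r t) 0).
  - apply (no_r_pos_s_sub_2r_nonpos t); auto; lra.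
  - apply (no_r_pos_s_sub_2r_pos t); auto; [intros z Hz; apply Ha | |]; lra.
Qed.

Lemma s_add_2r_zero_where_a_pos T : 0 <= v ->
  (forall t, t <= T -> 0 < a t) -> (forall t, t <= T -> r t <= 0) ->
  is_lim r m_infty 0 -> is_lim s m_infty 0 -> forall t, t <= T -> s t + 2 * r t = 0.
Proof.
  intros Hv Ha Hr Hrm Hsm xi Hxi.
  set (w t := s t + 2 * r t).
  assert (Hlim : is_lim (fun t => w t ^ 2) m_infty ((0 + 2 * 0) ^ 2)).
  { apply (is_lim_comp_ex_derive (fun y => y ^ 2)); [auto_derive; auto|].
    apply is_lim_plus'; [exact Hsm | exact (is_lim_scal_l r 2 m_infty 0 Hrm)]. }
  apply pow2_nonpos_eq_0.
  replace 0 with ((0 + 2 * 0) ^ 2) by ring.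
  apply (is_lim_lower_bound (fun t => w t ^ 2) m_infty _ _); [|exact Hlim].
  exists xi. intros t Ht.
  apply (is_derive_nonpos_ge (fun t => w t ^ 2)
           (fun t => INR 2 * (- (a t + v) * w t) * w t ^ Nat.pred 2) t xi); [lra| |].
  - intros z Hz. apply is_derive_pow, is_derive_s_add_2r, Hr. lra.
  - intros z Hz. specialize (Ha z ltac:(lra)). simpl. nra.
Qed.

Lemma r_neg_s_add_2r_zero (a0 : R) : 0 <= v -> nonconstant a b r s ->
  is_lim a m_infty a0 -> 0 < a0 -> is_lim r m_infty 0 -> is_lim s m_infty 0 ->
  is_lim a p_infty 0 -> forall t, r t < 0 /\ s t + 2 * r t = 0.
Proof.
  intros Hv Hnc Ham Ha0 Hrm Hsm Hap.
  destruct (is_lim_m_infty_near a a0 a0 Ham Ha0) as [T HT].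
  assert (Ha : forall t, t <= T -> 0 < a t).
  { intros t Ht. specialize (HT t Ht). apply Rabs_def2 in HT. lra. }
  pose proof (r_nonpos_where_a_pos T Hv Hnc Ha Hrm Hap) as Hr.
  pose proof (s_add_2r_zero_where_a_pos T Hv Ha Hr Hrm Hsm) as Hw.
  assert (Hneg : forall t, t <= T -> r t < 0).
  { intros t Ht. destruct (Hr t Ht) as [|Hr0]; auto.
    destruct (rest_point_not_nonconstant t); auto. specialize (Hw t Ht). lra. }
  assert (Hneg' : forall t, T <= t -> r t < 0).
  { intros t Ht. destruct (Rlt_dec (r t) 0) as [|Hrt]; auto. exfalso.
    specialize (Hneg T (Rle_refl T)).
    destruct (continuity_first_root (fun t => - r t) T t) as [eta [Heta [Hreta Hpos]]];
      [apply continuity_opp, trajectory_continuity | destruct (Req_dec T t) as [->|] | | |];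
      try lra.
    apply (rest_point_not_nonconstant eta); auto; [lra|].
    assert (s eta + 2 * r eta = 0); [|lra].
    apply (s_add_2r_zero_stable T eta T eta); try lra.
    - intros z Hz. destruct (Req_dec z eta) as [->|]; [lra|]. specialize (Hpos z ltac:(lra)). lra.
    - apply Hw, Rle_refl. }
  intros t. destruct (Rle_dec t T).
  - split; [apply Hneg | apply Hw]; lra.
  - split; [apply Hneg'; lra|].
    apply (s_add_2r_zero_stable T t T t); try lra.
    + intros z Hz. left. apply Hneg'. lra.
    + apply Hw, Rle_refl.
Qed.

Lemma first_integral_limit x p q : tends_to a b r s x p q ->
  forall t, s t + v * b t + a t ^ 2 / 2 = 0 + v * q + p ^ 2 / 2.
Proof.
  intros (Ha & Hb & _ & Hs). apply (is_lim_const_fun _ x); [exact first_integral|].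
  apply is_lim_plus'; [apply is_lim_plus'; [exact Hs | exact (is_lim_scal_l b v x q Hb)]|].
  exact (is_lim_comp_ex_derive (fun y => y ^ 2 / 2) a x p ltac:(auto_derive; auto) Ha).
Qed.

Lemma not_nonconstant_of_a_to_zero : 0 < v ->
  is_lim a m_infty 0 -> is_lim r m_infty 0 -> is_lim s m_infty 0 -> ~ nonconstant a b r s.
Proof.
  intros Hv Ham Hrm Hsm.
  destruct (is_lim_m_infty_near a 0 (4 * v / 5) Ham) as [T HT]; [lra|].
  assert (Hlim : is_lim (fun t => r t ^ 2 + s t ^ 2) m_infty (0 ^ 2 + 0 ^ 2)).
  { apply is_lim_plus'; apply (is_lim_comp_ex_derive (fun y => y ^ 2)); auto; auto_derive; auto. }
  assert (HQ : r T ^ 2 + s T ^ 2 <= 0 ^ 2 + 0 ^ 2).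
  { apply (is_lim_lower_bound (fun t => r t ^ 2 + s t ^ 2) m_infty _ _); [|exact Hlim].
    exists T. intros t Ht.
    apply (is_derive_nonpos_ge (fun t => r t ^ 2 + s t ^ 2)
             (fun t => speed2_rhs v (a t) (r t) (s t)) t T);
      [lra | intros; apply is_derive_speed2 |].
    intros z Hz. specialize (HT z ltac:(lra)). rewrite Rminus_0_r in HT.
    destruct (speed2_rhs_between v (a z) (r z) (s z) (4 * v / 5)) as [_ Hle]; [lra|].
    replace (- 2 * v + 5 / 2 * (4 * v / 5)) with 0 in Hle by field. lra. }
  apply (rest_point_not_nonconstant T); nra.
Qed.

Lemma H1_endpoint a0 b0 : 0 < v -> nonconstant a b r s -> H1 a b r s a0 b0 -> 0 < a0 ->
  a0 = 4 * v /\ b0 = -8 * v + 2 /\ forall t, r t < 0.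
Proof.
  intros Hv Hnc [Hm Hp] Ha0.
  destruct Hm as (Ham & Hbm & Hrm & Hsm). pose proof Hp as (Hap & Hbp & _).
  pose proof (r_neg_s_add_2r_zero a0 ltac:(lra) Hnc Ham Ha0 Hrm Hsm Hap) as Hprof.
  assert (Hba : forall t u, b t + 2 * a t = b u + 2 * a u).
  { apply is_derive_zero_const. intros t. destruct (traj t) as (Ha & Hb & _).
    auto_derive_hyps. destruct (Hprof t). lra. }
  pose proof (is_lim_const_fun _ p_infty _ Hba
                (is_lim_plus' _ _ _ _ _ Hbp (is_lim_scal_l a 2 p_infty 0 Hap))) as Hba_p.
  pose proof (is_lim_const_fun _ m_infty _ Hba
                (is_lim_plus' _ _ _ _ _ Hbm (is_lim_scal_l a 2 m_infty a0 Ham))) as Hba_m.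
  pose proof (first_integral_limit p_infty 0 2 Hp) as Hint.
  assert (Hpar : forall t, r t + (- a t ^ 2 / 4 + v * a t) = 0).
  { intros t. specialize (Hba_p t). specialize (Hint t). destruct (Hprof t) as [_ Hw].
    assert (b t = 2 - 2 * a t) by lra. assert (s t = - 2 * r t) by lra. nra. }
  assert (Hpar0 : r 0 + (- a 0 ^ 2 / 4 + v * a 0) = 0 + (- a0 ^ 2 / 4 + v * a0)).
  { apply (is_lim_const_fun (fun t => r t + (- a t ^ 2 / 4 + v * a t)) m_infty).
    - intros t u. now rewrite !Hpar.
    - apply is_lim_plus'; [exact Hrm|].
      exact (is_lim_comp_ex_derive (fun y => - y ^ 2 / 4 + v * y) a m_infty a0
               ltac:(auto_derive; auto) Ham). }
  rewrite Hpar in Hpar0.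
  assert (a0 = 4 * v) by nra.
  specialize (Hba_p 0). specialize (Hba_m 0).
  repeat split; [lra | lra | intros t; apply Hprof].
Qed.

End Trajectory.

Lemma zero_speed_not_nonconstant a b r s (am bm ap bp : R) :
  trajectory 0 a b r s -> tends_to a b r s m_infty am bm -> tends_to a b r s p_infty ap bp ->
  (am = 0 \/ ap = 0) -> ~ nonconstant a b r s.
Proof.
  intros Ht Hm Hp Ha0.
  assert (Hs : forall t, s t = - a t ^ 2 / 2).
  { intros t. destruct Ha0 as [->| ->].
    - pose proof (first_integral_limit 0 a b r s Ht m_infty 0 bm Hm t). nra.
    - pose proof (first_integral_limit 0 a b r s Ht p_infty 0 bp Hp t). nra. }
  set (dg t := r t ^ 2 + a t ^ 4 / 4 + a t ^ 2 * Rabs (r t) / 2).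
  assert (Hdg : forall t, is_derive (fun t => a t * r t) t (dg t)).
  { intros t. destruct (Ht t) as (Ha & _ & Hr & _). auto_derive_hyps.
    unfold dg. rewrite Hs. field. }
  assert (Hdg_nonneg : forall t, 0 <= dg t).
  { intros t. unfold dg. pose proof (Rabs_pos (r t)). nra. }
  assert (Hlim : forall x p q, tends_to a b r s x p q -> is_lim (fun t => a t * r t) x (p * 0)).
  { intros x p q (Ha & _ & Hr & _). exact (is_lim_mult a r x p 0 Ha Hr I). }
  assert (Hg : forall t, a t * r t = 0).
  { intros t. apply Rle_antisym.
    - replace 0 with (ap * 0) by ring.
      apply (is_lim_lower_bound (fun t => a t * r t) p_infty _ _); [|exact (Hlim _ _ _ Hp)].
      exists t. intros u Hu.
      apply (is_derive_nonneg_le (fun t => a t * r t) dg t u); auto; lra.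
    - replace 0 with (am * 0) by ring.
      apply (is_lim_upper_bound (fun t => a t * r t) m_infty _ _); [|exact (Hlim _ _ _ Hm)].
      exists t. intros u Hu.
      apply (is_derive_nonneg_le (fun t => a t * r t) dg u t); auto; lra. }
  assert (Hdg0 : dg 0 = 0).
  { rewrite <- (is_derive_unique _ _ _ (Hdg 0)).
    apply is_derive_unique, (is_derive_ext (fun _ => 0)); [intros t; now rewrite Hg|].
    exact (is_derive_const (K := R_AbsRing) (V := R_NormedModule) 0 0). }
  apply (rest_point_not_nonconstant 0 a b r s Ht 0);
    unfold dg in Hdg0; pose proof (Rabs_pos (r 0)); [nra|].
  rewrite Hs. nra.
Qed.

(** * Symmetries and the explicit front *)

Lemma trajectory_opp v a b r s : trajectory v a b r s ->
  trajectory v (fun t => - a t) b (fun t => - r t) s.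
Proof.
  intros Ht t. destruct (Ht t) as (Ha & Hb & Hr & Hs). split; [|split; [|split]].
  - auto_derive_hyps. ring.
  - exact Hb.
  - auto_derive_hyps. rewrite Rabs_Ropp. field.
  - eapply is_derive_eq; [exact Hs | ring].
Qed.

Lemma nonconstant_opp a b r s : nonconstant a b r s ->
  nonconstant (fun t => - a t) b (fun t => - r t) s.
Proof.
  intros [x [y Hxy]]. exists x, y. intros E. apply Hxy.
  injection E as Ea Eb Er Es. f_equal; [f_equal; [f_equal|] |]; lra.
Qed.

Lemma tends_to_opp a b r s x p q : tends_to a b r s x p q ->
  tends_to (fun t => - a t) b (fun t => - r t) s x (- p) q.
Proof.
  intros (Ha & Hb & Hr & Hs). split; [|split; [|split]]; auto.
  - exact (is_lim_opp a x p Ha).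
  - rewrite <- Ropp_0. exact (is_lim_opp r x 0 Hr).
Qed.

Lemma H1_opp a b r s a0 b0 : H1 a b r s a0 b0 ->
  H1 (fun t => - a t) b (fun t => - r t) s (- a0) b0.
Proof.
  intros [Hm Hp]. split; [now apply tends_to_opp|].
  rewrite <- Ropp_0. now apply tends_to_opp.
Qed.

Lemma trajectory_rev v a b r s : trajectory v a b r s ->
  trajectory (- v) (fun t => - a (- t)) (fun t => - b (- t)) (fun t => r (- t)) (fun t => s (- t)).
Proof.
  intros Ht t. destruct (Ht (- t)) as (Ha & Hb & Hr & Hs).
  split; [|split; [|split]]; auto_derive_hyps; field.
Qed.

Lemma nonconstant_rev a b r s : nonconstant a b r s ->
  nonconstant (fun t => - a (- t)) (fun t => - b (- t)) (fun t => r (- t)) (fun t => s (- t)).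
Proof.
  intros [x [y Hxy]]. exists (- x), (- y). rewrite !Ropp_involutive. intros E. apply Hxy.
  injection E as Ea Eb Er Es. f_equal; [f_equal; [f_equal|] |]; lra.
Qed.

Lemma tends_to_rev a b r s x p q : tends_to a b r s x p q ->
  tends_to (fun t => - a (- t)) (fun t => - b (- t)) (fun t => r (- t)) (fun t => s (- t))
    (Rbar_opp x) (- p) (- q).
Proof.
  intros (Ha & Hb & Hr & Hs). split; [|split; [|split]].
  - exact (is_lim_opp _ _ p (is_lim_comp_opp a x p Ha)).
  - exact (is_lim_opp _ _ q (is_lim_comp_opp b x q Hb)).
  - exact (is_lim_comp_opp r x 0 Hr).
  - exact (is_lim_comp_opp s x 0 Hs).
Qed.

Lemma H1_rev a b r s a0 b0 : H1 a b r s a0 b0 ->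
  H2 (fun t => - a (- t)) (fun t => - b (- t)) (fun t => r (- t)) (fun t => s (- t)) (- a0) (- b0).
Proof.
  intros [Hm Hp]. split; [|exact (tends_to_rev _ _ _ _ _ _ _ Hm)].
  replace 0 with (- 0) by ring. exact (tends_to_rev _ _ _ _ _ _ _ Hp).
Qed.

Lemma H2_rev a b r s a0 b0 : H2 a b r s a0 b0 ->
  H1 (fun t => - a (- t)) (fun t => - b (- t)) (fun t => r (- t)) (fun t => s (- t)) (- a0) (- b0).
Proof.
  intros [Hm Hp]. split; [exact (tends_to_rev _ _ _ _ _ _ _ Hp)|].
  replace 0 with (- 0) by ring. replace 2 with (- -2) by ring.
  exact (tends_to_rev _ _ _ _ _ _ _ Hm).
Qed.

Definition front_a (v t : R) : R := 4 * v / (1 + exp (v * t)).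

Definition front_r (v t : R) : R := front_a v t ^ 2 / 4 - v * front_a v t.

Lemma is_derive_front_a v t : is_derive (front_a v) t (front_r v t).
Proof.
  unfold front_r, front_a. pose proof (exp_pos (v * t)).
  auto_derive; [lra | field; lra].
Qed.

Lemma is_derive_front_r v t :
  is_derive (front_r v) t ((front_a v t / 2 - v) * front_r v t).
Proof.
  pose proof (is_derive_front_a v t). unfold front_r at 1. auto_derive_hyps. field.
Qed.

Lemma front_a_bounds v t : 0 < v -> 0 < front_a v t < 4 * v.
Proof.
  intros Hv. unfold front_a. pose proof (exp_pos (v * t)).
  split; [apply Rdiv_lt_0_compat; lra|].
  apply Rlt_div_l; [lra | nra].
Qed.

Lemma front_a_opp v t : front_a v (- t) = 4 * v - front_a v t.
Proof.
  unfold front_a. rewrite Ropp_mult_distr_r_reverse, exp_Ropp.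
  pose proof (exp_pos (v * t)). field. lra.
Qed.

Lemma is_lim_front_a_m_infty v : 0 < v -> is_lim (front_a v) m_infty (4 * v).
Proof.
  intros Hv.
  assert (Hexp : is_lim (fun t => exp (v * t)) m_infty 0).
  { apply (is_lim_comp exp (fun t => v * t) m_infty 0 m_infty is_lim_exp_m); [|now exists 0].
    apply is_lim_spec. intros M. exists (M / v). intros t Ht.
    replace M with (v * (M / v)) by (field; lra). apply Rmult_lt_compat_l; lra. }
  replace (4 * v) with (4 * v / (1 + 0)) by field.
  apply (is_lim_comp_ex_derive (fun y => 4 * v / (1 + y))); [auto_derive; lra | exact Hexp].
Qed.

Lemma is_lim_front_a_p_infty v : 0 < v -> is_lim (front_a v) p_infty 0.
Proof.
  intros Hv. apply (is_lim_ext (fun t => 4 * v - front_a v (- t))).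
  { intros t. rewrite front_a_opp. ring. }
  replace 0 with (4 * v - 4 * v) by ring.
  apply is_lim_minus'; [apply is_lim_const|].
  exact (is_lim_comp_opp _ m_infty _ (is_lim_front_a_m_infty v Hv)).
Qed.

Lemma front_trajectory v : 0 < v ->
  trajectory v (front_a v) (fun t => 2 - 2 * front_a v t) (front_r v) (fun t => - 2 * front_r v t).
Proof.
  intros Hv t. pose proof (is_derive_front_a v t) as Ha. pose proof (is_derive_front_r v t) as Hr.
  assert (Hneg : front_r v t < 0).
  { pose proof (front_a_bounds v t Hv). unfold front_r. nra. }
  split; [exact Ha|split; [|split]].
  - auto_derive_hyps. ring.
  - eapply is_derive_eq; [exact Hr|]. rewrite Rabs_left by exact Hneg. field.
  - auto_derive_hyps. field.
Qed.

Lemma front_tends_to v x (l b0 : R) : is_lim (front_a v) x l -> l ^ 2 / 4 - v * l = 0 ->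
  b0 = 2 - 2 * l ->
  tends_to (front_a v) (fun t => 2 - 2 * front_a v t) (front_r v) (fun t => - 2 * front_r v t)
    x l b0.
Proof.
  intros Ha Hl ->. split; [exact Ha | split; [|split]].
  - exact (is_lim_comp_ex_derive (fun y => 2 - 2 * y) _ x l ltac:(auto_derive; auto) Ha).
  - rewrite <- Hl.
    exact (is_lim_comp_ex_derive (fun y => y ^ 2 / 4 - v * y) _ x l ltac:(auto_derive; auto) Ha).
  - rewrite <- (Rmult_0_r (-2)), <- Hl.
    exact (is_lim_scal_l (front_r v) (-2) x _ (is_lim_comp_ex_derive
             (fun y => y ^ 2 / 4 - v * y) _ x l ltac:(auto_derive; auto) Ha)).
Qed.

Lemma nonconstant_of_is_lim_neq a b r s (p q : R) :
  is_lim a m_infty p -> is_lim a p_infty q -> p <> q -> nonconstant a b r s.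
Proof.
  intros Hm Hp Hpq.
  set (e := Rabs (p - q) / 2).
  assert (He : 0 < e) by (apply Rdiv_lt_0_compat; [apply Rabs_pos_lt; lra | lra]).
  destruct (is_lim_m_infty_near a p e Hm He) as [T HT].
  destruct (is_lim_m_infty_near (fun t => a (- t)) q e (is_lim_comp_opp a p_infty q Hp) He)
    as [T' HT'].
  exists T, (- T'). intros E. injection E as Ea _ _ _.
  specialize (HT T (Rle_refl T)). specialize (HT' T' (Rle_refl T')).
  rewrite Ea in HT. apply Rabs_def2 in HT, HT'. unfold e in *.
  destruct (Rle_dec 0 (p - q)); [rewrite Rabs_right in * | rewrite Rabs_left in *]; lra.
Qed.

Lemma front_H1_orbit v : 0 < v -> exists a b r s : R -> R,
  trajectory v a b r s /\ nonconstant a b r s /\ H1 a b r s (4 * v) (-8 * v + 2).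
Proof.
  intros Hv.
  pose proof (is_lim_front_a_m_infty v Hv) as Hm. pose proof (is_lim_front_a_p_infty v Hv) as Hp.
  exists (front_a v), (fun t => 2 - 2 * front_a v t), (front_r v), (fun t => - 2 * front_r v t).
  split; [now apply front_trajectory | split].
  - apply (nonconstant_of_is_lim_neq _ _ _ _ (4 * v) 0 Hm Hp). lra.
  - split; apply front_tends_to; auto; field.
Qed.

(** * Classification *)

Lemma H1_orbit_iff v (Hv : 0 < v) (a0 b0 : R) :
  (exists a b r s : R -> R, trajectory v a b r s /\ nonconstant a b r s /\ H1 a b r s a0 b0)
  <-> ((a0 = 4 * v /\ b0 = -8 * v + 2) \/ (a0 = -4 * v /\ b0 = -8 * v + 2)).
Proof.
  split.
  - intros (a & b & r & s & Ht & Hnc & Hh).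
    destruct (Rtotal_order a0 0) as [Hneg|[->|Hpos]].
    + right. destruct (H1_endpoint v _ _ _ _ (trajectory_opp _ _ _ _ _ Ht) (- a0) b0 Hv
        (nonconstant_opp _ _ _ _ Hnc) (H1_opp _ _ _ _ _ _ Hh) ltac:(lra)) as (? & ? & _).
      split; lra.
    + destruct Hh as [(Ham & _ & Hrm & Hsm) _].
      now destruct (not_nonconstant_of_a_to_zero v a b r s Ht Hv Ham Hrm Hsm).
    + left. destruct (H1_endpoint v a b r s Ht a0 b0 Hv Hnc Hh Hpos) as (? & ? & _). auto.
  - intros [[-> ->]|[-> ->]]; [now apply front_H1_orbit|].
    destruct (front_H1_orbit v Hv) as (a & b & r & s & Ht & Hnc & Hh).
    exists (fun t => - a t), b, (fun t => - r t), s.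
    split; [now apply trajectory_opp | split; [now apply nonconstant_opp|]].
    replace (-4 * v) with (- (4 * v)) by ring. now apply H1_opp.
Qed.

Lemma H1_orbit_r_neg v (Hv : 0 < v) a b r s : trajectory v a b r s -> nonconstant a b r s ->
  H1 a b r s (4 * v) (-8 * v + 2) -> forall xi, r xi < 0.
Proof. intros Ht Hnc Hh. apply (H1_endpoint v a b r s Ht _ _ Hv Hnc Hh). lra. Qed.

Lemma H1_orbit_r_pos v (Hv : 0 < v) a b r s : trajectory v a b r s -> nonconstant a b r s ->
  H1 a b r s (-4 * v) (-8 * v + 2) -> forall xi, 0 < r xi.
Proof.
  intros Ht Hnc Hh xi.
  enough (- r xi < 0) by lra.
  apply (H1_orbit_r_neg v Hv (fun t => - a t) b (fun t => - r t) s).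
  - now apply trajectory_opp.
  - now apply nonconstant_opp.
  - replace (4 * v) with (- (-4 * v)) by ring. now apply H1_opp.
Qed.

Lemma no_H2_orbit v (Hv : 0 < v) (a0 b0 : R) a b r s :
  trajectory v a b r s -> H2 a b r s a0 b0 -> ~ nonconstant a b r s.
Proof.
  intros Ht [(Ham & _ & Hrm & Hsm) _].
  exact (not_nonconstant_of_a_to_zero v a b r s Ht Hv Ham Hrm Hsm).
Qed.

Lemma H2_orbit_iff_rev v (a0 b0 : R) :
  (exists a b r s : R -> R, trajectory v a b r s /\ nonconstant a b r s /\ H2 a b r s a0 b0)
  <-> (exists a b r s : R -> R,
         trajectory (- v) a b r s /\ nonconstant a b r s /\ H1 a b r s (- a0) (- b0)).
Proof.
  split; intros (a & b & r & s & Ht & Hnc & Hh);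
    exists (fun t => - a (- t)), (fun t => - b (- t)), (fun t => r (- t)), (fun t => s (- t));
    (split; [|split]).
  - now apply trajectory_rev.
  - now apply nonconstant_rev.
  - now apply H2_rev.
  - rewrite <- (Ropp_involutive v). now apply trajectory_rev.
  - now apply nonconstant_rev.
  - rewrite <- (Ropp_involutive a0), <- (Ropp_involutive b0). now apply H1_rev.
Qed.

Lemma H2_orbit_iff v (Hv : v < 0) (a0 b0 : R) :
  (exists a b r s : R -> R, trajectory v a b r s /\ nonconstant a b r s /\ H2 a b r s a0 b0)
  <-> ((a0 = 4 * v /\ b0 = -8 * v - 2) \/ (a0 = -4 * v /\ b0 = -8 * v - 2)).
Proof.
  rewrite H2_orbit_iff_rev, (H1_orbit_iff (- v)) by lra.
  split; intros [[]|[]]; [left|right|left|right]; split; lra.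
Qed.

Lemma H2_orbit_r_neg v (Hv : v < 0) a b r s : trajectory v a b r s -> nonconstant a b r s ->
  H2 a b r s (4 * v) (-8 * v - 2) -> forall xi, r xi < 0.
Proof.
  intros Ht Hnc Hh xi. rewrite <- (Ropp_involutive xi).
  apply (H1_orbit_r_neg (- v) ltac:(lra) _ _ (fun t => r (- t)) _ (trajectory_rev _ _ _ _ _ Ht)
           (nonconstant_rev _ _ _ _ Hnc)).
  replace (4 * - v) with (- (4 * v)) by ring.
  replace (-8 * - v + 2) with (- (-8 * v - 2)) by ring.
  now apply H2_rev.
Qed.

Lemma H2_orbit_r_pos v (Hv : v < 0) a b r s : trajectory v a b r s -> nonconstant a b r s ->
  H2 a b r s (-4 * v) (-8 * v - 2) -> forall xi, 0 < r xi.
Proof.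
  intros Ht Hnc Hh xi. rewrite <- (Ropp_involutive xi).
  apply (H1_orbit_r_pos (- v) ltac:(lra) _ _ (fun t => r (- t)) _ (trajectory_rev _ _ _ _ _ Ht)
           (nonconstant_rev _ _ _ _ Hnc)).
  replace (-4 * - v) with (- (-4 * v)) by ring.
  replace (-8 * - v + 2) with (- (-8 * v - 2)) by ring.
  now apply H2_rev.
Qed.

Lemma no_H1_orbit v (Hv : v < 0) (a0 b0 : R) a b r s :
  trajectory v a b r s -> H1 a b r s a0 b0 -> ~ nonconstant a b r s.
Proof.
  intros Ht Hh Hnc.
  exact (no_H2_orbit (- v) ltac:(lra) _ _ _ _ _ _ (trajectory_rev _ _ _ _ _ Ht)
           (H1_rev _ _ _ _ _ _ Hh)
           (nonconstant_rev _ _ _ _ Hnc)).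
Qed.

Theorem theorem5 :
  (* Part 1: v > 0 *)
  (forall v : R, 0 < v ->
     (forall a0 b0 : R,
        (exists a b r s : R -> R,
           trajectory v a b r s /\ nonconstant a b r s /\ H1 a b r s a0 b0)
        <-> ((a0 = 4 * v /\ b0 = -8 * v + 2) \/ (a0 = -4 * v /\ b0 = -8 * v + 2))) /\
     (forall a b r s : R -> R,
        trajectory v a b r s -> nonconstant a b r s ->
        H1 a b r s (4 * v) (-8 * v + 2) -> forall xi, r xi < 0) /\
     (forall a b r s : R -> R,
        trajectory v a b r s -> nonconstant a b r s ->
        H1 a b r s (-4 * v) (-8 * v + 2) -> forall xi, 0 < r xi) /\
     (forall (a0 b0 : R) (a b r s : R -> R),
        trajectory v a b r s -> H2 a b r s a0 b0 -> ~ nonconstant a b r s)) /\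
  (* Part 2: v = 0 *)
  (forall (a b r s : R -> R) (am bm ap bp : R),
     trajectory 0 a b r s ->
     tends_to a b r s m_infty am bm ->
     tends_to a b r s p_infty ap bp ->
     (am = 0 \/ ap = 0) ->
     ~ nonconstant a b r s) /\
  (* Part 3: v < 0 *)
  (forall v : R, v < 0 ->
     (forall a0 b0 : R,
        (exists a b r s : R -> R,
           trajectory v a b r s /\ nonconstant a b r s /\ H2 a b r s a0 b0)
        <-> ((a0 = 4 * v /\ b0 = -8 * v - 2) \/ (a0 = -4 * v /\ b0 = -8 * v - 2))) /\
     (forall a b r s : R -> R,
        trajectory v a b r s -> nonconstant a b r s ->
        H2 a b r s (4 * v) (-8 * v - 2) -> forall xi, r xi < 0) /\
     (forall a b r s : R -> R,
        trajectory v a b r s -> nonconstant a b r s ->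
        H2 a b r s (-4 * v) (-8 * v - 2) -> forall xi, 0 < r xi) /\
     (forall (a0 b0 : R) (a b r s : R -> R),
        trajectory v a b r s -> H1 a b r s a0 b0 -> ~ nonconstant a b r s)).
Proof.
  split; [|split].
  - intros v Hv. split; [|split; [|split]].
    + exact (H1_orbit_iff v Hv).
    + exact (H1_orbit_r_neg v Hv).
    + exact (H1_orbit_r_pos v Hv).
    + exact (no_H2_orbit v Hv).
  - exact zero_speed_not_nonconstant.
  - intros v Hv. split; [|split; [|split]].
    + exact (H2_orbit_iff v Hv).
    + exact (H2_orbit_r_neg v Hv).
    + exact (H2_orbit_r_pos v Hv).
    + exact (no_H1_orbit v Hv).
Qed.
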